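(* Let $\mathbb{X}$ be a nonempty finite set of points in $\mathbb{P}^1\times\mathbb{P}^1$ and let $\mathcal{G}(I_{\mathbb{X}})=\{g_1,\dots,g_r\}$ be a minimal set of bihomogeneous generators of $I_{\mathbb{X}}$. Then there is no partition $\mathcal{G}(I_{\mathbb{X}})=A\sqcup B$ with $A\neq\emptyset$ and $B\neq\emptyset$ such that both $J=\langle A\rangle$ and $K=\langle B\rangle$ are defining ideals of (finite) sets of points in $\mathbb{P}^1\times\mathbb{P}^1$.
   Context: $R=\mathbb{C}[x_0,x_1,y_0,y_1]$ is bigraded with $\deg x_i=(1,0)$, $\deg y_i=(0,1)$. For a point $P=A\times B$ with $A=[a_0:a_1]$, $B=[b_0:b_1]$, $I_P=\langle a_1x_0-a_0x_1,\ b_1y_0-b_0y_1\rangle$; for a finite set $\mathbb{X}$ of points, $I_{\mathbb{X}}=\bigcap_{P\in\mathbb{X}}I_P$ (the defining ideal of $\mathbb{X}$). *)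

From HB Require Import structures.
From mathcomp Require Import all_boot all_order all_algebra.
From mathcomp Require Import reals.
From mathcomp Require Import complex.
From mathcomp Require Import mpoly.

Set Implicit Arguments.
Unset Strict Implicit.
Unset Printing Implicit Defensive.

Import Order.TTheory GRing.Theory Num.Theory.
Local Open Scope ring_scope.
Local Open Scope complex_scope.

(* The ring R = C[x0,x1,y0,y1]: variables 'X_0 = x0, 'X_1 = x1, 'X_2 = y0, 'X_3 = y1,
   with C = R[i] the complex numbers built over a model R of the reals. *)
Definition Cpoly (R : realType) := {mpoly R[i][4]}.

Definition v0 : 'I_4 := @Ordinal 4 0 isT.
Definition v1 : 'I_4 := @Ordinal 4 1 isT.
Definition v2 : 'I_4 := @Ordinal 4 2 isT.
Definition v3 : 'I_4 := @Ordinal 4 3 isT.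

Definition bihomogeneous (R : realType) (p : Cpoly R) : Prop :=
  exists d1 d2 : nat, forall m, m \in msupp p ->
    (m v0 + m v1 = d1)%N /\ (m v2 + m v3 = d2)%N.

Definition ideal_of (R : realType) := Cpoly R -> Prop.

Definition gen_ideal (R : realType) (I : finType) (P : pred I) (g : I -> Cpoly R)
  : ideal_of R :=
  fun p => exists c : I -> Cpoly R, p = \sum_(i | P i) c i * g i.

(* A point A x B of P^1 x P^1, given by representatives ((a0,a1),(b0,b1)),
   both nonzero. *)
Definition point (R : realType) := ((R[i] * R[i]) * (R[i] * R[i]))%type.

Definition valid_point (R : realType) (P : point R) : Prop :=
  P.1 != (0, 0) /\ P.2 != (0, 0).

Definition point_gens (R : realType) (P : point R) (k : 'I_2) : Cpoly R :=
  if k == ord0 then P.1.2 *: 'X_v0 - P.1.1 *: 'X_v1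
  else P.2.2 *: 'X_v2 - P.2.1 *: 'X_v3.

Definition point_ideal (R : realType) (P : point R) : ideal_of R :=
  gen_ideal predT (point_gens P).

(* I_X = intersection of I_P over P in X; X a finite set of points given by a
   list of representatives (repetitions are harmless). *)
Definition points_ideal (R : realType) (X : seq (point R)) : ideal_of R :=
  fun p => forall P, P \in X -> point_ideal P p.

Definition same_ideal (R : realType) (I J : ideal_of R) : Prop :=
  forall p, I p <-> J p.

Definition is_points_ideal (R : realType) (J : ideal_of R) : Prop :=
  exists X : seq (point R), (forall P, P \in X -> valid_point P) /\
    same_ideal J (points_ideal X).

Definition minimal_bihom_gens (R : realType) (r : nat) (g : 'I_r -> Cpoly R)
  (I : ideal_of R) : Prop :=
  (forall i, bihomogeneous (g i)) /\
  same_ideal (gen_ideal predT g) I /\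
  (forall i : 'I_r, ~ gen_ideal (fun j => j != i) g (g i)).

From HB Require Import structures.
From mathcomp Require Import all_boot all_order all_algebra.
From mathcomp Require Import reals complex mpoly.

Set Implicit Arguments.
Unset Strict Implicit.
Unset Printing Implicit Defensive.

Import Order.TTheory GRing.Theory Num.Theory.
Local Open Scope ring_scope.

(* Setting y0 = y1 = 0 is a ring endomorphism that fixes the bihomogeneous
   polynomials of bidegree (d, 0) and kills the other bihomogeneous ones.  The
   y-free elements of I_X are exactly the multiples of the squarefree product F
   of the linear forms a1 x0 - a0 x1 over the first coordinates A of the points
   of X.  Writing F in the generators and setting y = 0 shows that some minimal
   generator is a nonzero multiple of F, so no other minimal generator can be
   y-free.  But every ideal of points contains its own nonzero F, so each part
   of a partition generating an ideal of points would contain a y-free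
   generator. *)

Section Divides.
Variable K : comNzRingType.
Implicit Types a b c d D : K.

Definition divides a b := exists q, b = a * q.

Lemma divides0 a : divides a 0.
Proof. by exists 0; rewrite mulr0. Qed.

Lemma divides_mulr a b c : divides a b -> divides a (b * c).
Proof. by move=> [q ->]; exists (q * c); rewrite mulrA. Qed.

Lemma divides_mull a b c : divides a b -> divides a (c * b).
Proof. by rewrite mulrC; apply: divides_mulr. Qed.

Lemma dividesD a b c : divides a b -> divides a c -> divides a (b + c).
Proof. by move=> [q ->] [q' ->]; exists (q + q'); rewrite mulrDr. Qed.

Lemma divides_sum D (I : Type) (r : seq I) (P : pred I) (F : I -> K) :
  (forall i, P i -> divides D (F i)) -> divides D (\sum_(i <- r | P i) F i).
Proof.
by move=> dF; apply: big_ind => //; [apply: divides0 | apply: dividesD].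
Qed.

Lemma divides_subMM D a b c d :
  divides D (a - b) -> divides D (c - d) -> divides D (a * c - b * d).
Proof.
move=> Dab Dcd; have -> : a * c - b * d = a * (c - d) + (a - b) * d.
  by rewrite mulrBr mulrBl addrA subrK.
by apply: dividesD; [apply: divides_mull | apply: divides_mulr].
Qed.

Lemma divides_subXX D a b k : divides D (a - b) -> divides D (a ^+ k - b ^+ k).
Proof. by rewrite subrXX; apply: divides_mulr. Qed.

End Divides.

Section ScaledVars.
Variables (n : nat) (K : comNzRingType).
Implicit Types (p q : {mpoly K[n]}) (m : 'X_{1..n}).

Definition scaled_vars (w : 'I_n -> K) : n.-tuple {mpoly K[n]} :=
  [tuple w i *: 'X_i | i < n].

Lemma comp_scaled_varsX w m :
  'X_[m] \mPo scaled_vars w = (\prod_i w i ^+ m i) *: 'X_[m].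
Proof.
rewrite comp_mpolyX mpolyXE_id -scaler_prod; apply: eq_bigr => i _.
by rewrite tnth_mktuple exprZn.
Qed.

Lemma mcoeff_scaled_vars w p m :
  (p \mPo scaled_vars w)@_m = p@_m * \prod_i w i ^+ m i.
Proof.
elim/mpolyind: p => [|c m' p _ _ IH]; first by rewrite raddf0 !mcoeff0 mul0r.
rewrite comp_mpolyD comp_mpolyZ comp_scaled_varsX !mcoeffD !mcoeffZ IH mcoeffX.
by case: eqP => [->|_]; rewrite ?mulr1 ?mulr0 ?mul0r ?add0r // mulrDl.
Qed.

Lemma scaled_vars_dhomog s d p :
  p \is d.-homog -> p \mPo scaled_vars (fun=> s) = s ^+ d *: p.
Proof.
move=> /dhomogP hp; apply/mpolyP => m; rewrite mcoeff_scaled_vars mcoeffZ.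
rewrite prodrXr -mdegE mulrC.
have [/hp -> //|] := boolP (m \in msupp p).
by move=> /memN_msupp_eq0 ->; rewrite !mulr0.
Qed.

Lemma divides_comp_mpoly_sub D (lq : n.-tuple {mpoly K[n]}) p :
  (forall i, divides D (tnth lq i - 'X_i)) -> divides D (p \mPo lq - p).
Proof.
move=> Dlq; rewrite {2}[p]mpolyE comp_mpolyEX -sumrB.
apply: divides_sum => m _; rewrite -scalerBr -mul_mpolyC comp_mpolyX mpolyXE_id.
apply: divides_mull; apply: (big_ind2 (fun a b => divides D (a - b))).
- by rewrite subrr; apply: divides0.
- by move=> ? ? ? ?; apply: divides_subMM.
- by move=> i _; apply: divides_subXX.
Qed.
End ScaledVars.


Lemma big_ord4 (T : Type) (idx : T) (op : Monoid.law idx) (F : 'I_4 -> T) :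
  \big[op/idx]_(i < 4) F i = op (F v0) (op (F v1) (op (F v2) (F v3))).
Proof.
rewrite !big_ord_recl big_ord0 Monoid.mulm1.
by congr (op (F _) (op (F _) (op (F _) (F _)))); apply: val_inj.
Qed.

Lemma ord4_cases (i : 'I_4) : [\/ i = v0, i = v1, i = v2 | i = v3].
Proof.
case: i => -[|[|[|[|//]]]] ilt;
  [constructor 1 | constructor 2 | constructor 3 | constructor 4];
  exact: val_inj.
Qed.

Section P1xP1.
Variable K : fieldType.
Local Notation M := {mpoly K[4]}.
Implicit Types (p h : M) (a b : K * K).

Definition xform a : M := a.2 *: 'X_v0 - a.1 *: 'X_v1.
Definition yform b : M := b.2 *: 'X_v2 - b.1 *: 'X_v3.

(* A substitution fixing every variable modulo [xform a] and killing
   [xform a], so that [xform a] divides exactly the polynomials it kills. *)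
Definition xline_subst a : 4.-tuple M :=
  if a.1 == 0 then [tuple 0; 'X_v1; 'X_v2; 'X_v3]
  else [tuple 'X_v0; (a.2 / a.1) *: 'X_v0; 'X_v2; 'X_v3].

Lemma xform_neq0 a : a != (0, 0) -> xform a != 0.
Proof.
case: a => x y; apply: contraNneq => /= xf0.
have := congr1 (mcoeff U_(v0)) xf0; have := congr1 (mcoeff U_(v1)) xf0.
rewrite /xform /= !mcoeffB !mcoeffZ !mcoeffXU /= !mcoeff0.
by rewrite !mulr1 !mulr0 subr0 sub0r => /eqP; rewrite oppr_eq0 => /eqP -> ->.
Qed.

Lemma xform_xline_subst a : xform a \mPo xline_subst a = 0.
Proof.
rewrite /xform /xline_subst comp_mpolyB !comp_mpolyZ !comp_mpolyXU.
case: eqP => [-> /=|/eqP x0 /=]; first by rewrite scaler0 scale0r subrr.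
by rewrite scalerA mulrCA mulfV // mulr1 subrr.
Qed.

Lemma xline_subst_congr a :
  a != (0, 0) -> forall i, divides (xform a) (tnth (xline_subst a) i - 'X_i).
Proof.
case: a => x y a0 i; case: (ord4_cases i) => ->; rewrite /xline_subst /xform /=;
  have [x0|x0] := eqVneq x 0; rewrite (tnth_nth 0) /= ?subrr;
  try exact: divides0.
- have y0 : y != 0 by apply: contraNneq a0 => ->; rewrite x0.
  exists (- y^-1)%:MP; rewrite x0 scale0r subr0 mulrC mul_mpolyC scalerA.
  by rewrite mulNr mulVf // scaleN1r sub0r.
- exists x^-1%:MP; rewrite [RHS]mulrC mul_mpolyC scalerBr !scalerA mulVf //.
  by rewrite scale1r mulrC.
Qed.

Lemma divides_xform a p :
  a != (0, 0) -> p \mPo xline_subst a = 0 -> divides (xform a) p.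
Proof.
move=> a0 pa; have [q Dq] := divides_comp_mpoly_sub p (xline_subst_congr a0).
by exists (- q); rewrite mulrN -Dq pa sub0r opprK.
Qed.

Lemma xform_dhomog a : xform a \is 1.-homog.
Proof.
have homX i : 'X_i \is [in K[4], 1.-homog] by rewrite dhomogX; apply/eqP/mdeg1.
by rewrite rpredB ?rpredZ ?homX.
Qed.

Definition zero_y : 4.-tuple M := scaled_vars (fun i : 'I_4 => (val i < 2)%:R).

Lemma mcoeff_zero_y p m : (p \mPo zero_y)@_m = p@_m * (m v2 + m v3 == 0)%N%:R.
Proof.
rewrite mcoeff_scaled_vars big_ord4 /= !expr1n !mul1r !expr0n.
by rewrite -natrM mulnb addn_eq0.
Qed.

Lemma xform_zero_y a : xform a \mPo zero_y = xform a.
Proof.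
rewrite /xform comp_mpolyB !comp_mpolyZ !comp_mpolyXU -!tnth_nth.
by rewrite !tnth_mktuple !scale1r.
Qed.

Lemma yform_zero_y b : yform b \mPo zero_y = 0.
Proof.
rewrite /yform comp_mpolyB !comp_mpolyZ !comp_mpolyXU -!tnth_nth.
by rewrite !tnth_mktuple !scale0r !scaler0 subrr.
Qed.

(* The squarefree product of the forms [xform a], a in A. *)
Fixpoint xgen (A : seq (K * K)) : M :=
  if A is a :: A' then
    if xgen A' \mPo xline_subst a == 0 then xgen A' else xform a * xgen A'
  else 1.

Lemma xgen_zero_y A : xgen A \mPo zero_y = xgen A.
Proof.
elim: A => [|a A IH] /=; first exact: comp_mpoly1.
by case: ifP => _ //; rewrite rmorphM /= xform_zero_y IH.
Qed.

Lemma xgen_dhomog A : exists d, xgen A \is d.-homog.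
Proof.
elim: A => [|a A [d IH]] /=; first by exists 0%N; apply: dhomog1.
by case: ifP => _; [exists d | exists d.+1; apply: dhomogM (xform_dhomog a) IH].
Qed.

Lemma xgen_neq0 A : all (fun a => a != (0, 0)) A -> xgen A != 0.
Proof.
elim: A => [|a A IH] /=; first by rewrite oner_neq0.
by move=> /andP[a0 /IH A0]; case: ifP => _ //; rewrite mulf_neq0 ?xform_neq0.
Qed.

Lemma xgen_xline_subst A a : a \in A -> xgen A \mPo xline_subst a = 0.
Proof.
elim: A => [//|b A IH]; rewrite inE => /predU1P[->|aA] /=.
  by case: ifP => [/eqP //|_]; rewrite rmorphM /= xform_xline_subst mul0r.
by case: ifP => _; rewrite ?rmorphM /= IH ?mulr0.
Qed.

Lemma xgen_divides A h : all (fun a => a != (0, 0)) A ->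
  all (fun a => h \mPo xline_subst a == 0) A -> divides (xgen A) h.
Proof.
elim: A h => [|a A IH] h /=; first by exists h; rewrite mul1r.
move=> /andP[a0 A0] /andP[/eqP ha hA]; have [q hq] := IH h A0 hA.
case: ifP => [_|/negbT Fa]; first by exists q.
have /(divides_xform a0) [q' Dq] : q \mPo xline_subst a = 0.
  move/eqP: ha; rewrite hq rmorphM /= mulf_eq0 (negbTE Fa).
  by move/eqP.
by exists q'; rewrite hq Dq mulrCA mulrA.
Qed.

End P1xP1.

Arguments zero_y {K}.

Lemma dhomog_cofactor_const (n : nat) (K : numDomainType)
    (F a : {mpoly K[n]}) d e :
  F != 0 -> F \is d.-homog -> F * a \is e.-homog -> a@_0 != 0 -> a = (a@_0)%:MP.
Proof.
(* Compare the coefficients of a(2x) and a(x). *)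
move=> F0 Fd Fae a00.
pose two : n.-tuple {mpoly K[n]} := scaled_vars (fun=> 2).
have scale_a : 2 ^+ e *: a = 2 ^+ d *: (a \mPo two).
  apply: (mulfI F0); rewrite -!scalerAr -(scaled_vars_dhomog _ Fae) rmorphM /=.
  by rewrite (scaled_vars_dhomog _ Fd) -scalerAl.
have degE m : a@_m != 0 -> e = (d + mdeg m)%N.
  move=> am0; have := congr1 (mcoeff m) scale_a.
  rewrite !mcoeffZ mcoeff_scaled_vars prodrXr -mdegE mulrCA -exprD.
  rewrite [RHS]mulrC => /(mulIf am0).
  by rewrite -!natrX => /eqP; rewrite eqr_nat eqn_exp2l // => /eqP.
apply/mpolyP => m; rewrite mcoeffC; have [->|m0] := eqVneq m 0%MM.
  by rewrite mulr1.
rewrite mulr0; apply/eqP; apply: contraNT m0 => am0.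
by rewrite -mdeg_eq0 -(eqn_add2l d) addn0 -degE // (degE _ a00) mdeg0 addn0.
Qed.

Lemma sum_mul_eq1_mcoeff0 (n : nat) (K : comNzRingType) (I : finType)
    (b a : I -> {mpoly K[n]}) :
  \sum_i b i * a i = 1 -> exists i, (a i)@_0 != 0.
Proof.
move=> /(congr1 (mcoeff 0%MM)); rewrite raddf_sum mcoeff1 eqxx.
case: (pickP (fun i => (a i)@_0 != 0)) => [i ai|a0]; first by exists i.
rewrite big1 => [/eqP|i _]; first by rewrite eq_sym oner_eq0.
by rewrite /= rmorphM /= (eqP (negbFE (a0 i))) mulr0.
Qed.

Section PointIdeals.
Variable R : realType.
Local Notation M := (Cpoly R).
Implicit Types (p : M) (P : point R) (X : seq (point R)).

Lemma gen_ideal_dependent (I : finType) (g : I -> M) k l c :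
  l != k -> g l = g k * c -> gen_ideal (fun j => j != l) g (g l).
Proof.
move=> lk ->; exists (fun j => if j == k then c else 0).
rewrite (bigD1 k) 1?eq_sym //= eqxx big1 ?addr0 1?mulrC //.
by move=> j /andP[_ /negbTE ->]; rewrite mul0r.
Qed.

Lemma gen_ideal_gen (I : finType) (g : I -> M) k : gen_ideal predT g (g k).
Proof.
exists (fun j => (j == k)%:R); rewrite (bigD1 k) //= eqxx mul1r big1 ?addr0 //.
by move=> j /negbTE ->; rewrite mul0r.
Qed.

Lemma gen_ideal_zero_y (I : finType) (A : pred I) (g : I -> M) p :
  gen_ideal A g p ->
  exists c : I -> M,
    p \mPo zero_y = \sum_(i | A i) (c i \mPo zero_y) * (g i \mPo zero_y).
Proof.
move=> [c ->]; exists c; rewrite rmorph_sum.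
by apply: eq_bigr => i _; rewrite rmorphM.
Qed.

Lemma gen_ideal_zero_y_gen (I : finType) (A : pred I) (g : I -> M) p :
  gen_ideal A g p -> p \mPo zero_y = p -> p != 0 ->
  exists2 i, A i & g i \mPo zero_y != 0.
Proof.
move=> /gen_ideal_zero_y [c Dp] fixp p0.
case: (pickP (fun i => A i && (g i \mPo zero_y != 0))) => [i /andP[]|gA].
  by exists i.
case/eqP: p0; rewrite -fixp Dp big1 // => i Ai.
by have := gA i; rewrite Ai => /negbFE/eqP ->; rewrite mulr0.
Qed.

Lemma bihomogeneous_dhomog p : bihomogeneous p -> exists d, p \is d.-homog.
Proof.
move=> [d1 [d2 hp]]; exists (d1 + d2)%N; apply/dhomogP => m /hp[<- <-].
by rewrite /= mdegE big_ord4 /= !addnA.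
Qed.

Lemma bihomogeneous_zero_y p :
  bihomogeneous p -> p \mPo zero_y != 0 -> p \mPo zero_y = p.
Proof.
move=> [d1 [[|d2] hp]] p0; apply/mpolyP => m; rewrite mcoeff_zero_y.
  have [/hp[_ ->]|/memN_msupp_eq0 ->] := boolP (m \in msupp p);
  by rewrite ?mulr1 ?mul0r.
case/eqP: p0; apply/mpolyP => m'; rewrite mcoeff_zero_y mcoeff0.
have [/hp[_ ->]|/memN_msupp_eq0 ->] := boolP (m' \in msupp p);
by rewrite ?mulr0 ?mul0r.
Qed.

Lemma point_gens0 P : point_gens P ord0 = xform P.1.
Proof. by rewrite /point_gens eqxx. Qed.

Lemma point_gens_neq0 P k : k != ord0 -> point_gens P k = yform P.2.
Proof. by rewrite /point_gens => /negbTE ->. Qed.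

Lemma point_ideal_xline_subst P p :
  point_ideal P p -> p \mPo zero_y = p -> p \mPo xline_subst P.1 = 0.
Proof.
move=> /gen_ideal_zero_y [c Dp] <-; rewrite Dp rmorph_sum big1 // => k _.
rewrite rmorphM /=; have [->|k0] := eqVneq k ord0.
  by rewrite point_gens0 xform_zero_y xform_xline_subst mulr0.
by rewrite point_gens_neq0 // yform_zero_y rmorph0 mulr0.
Qed.

Lemma divides_xform_point_ideal P p : divides (xform P.1) p -> point_ideal P p.
Proof.
move=> [q ->]; exists (fun k => if k == ord0 then q else 0).
rewrite (bigD1 ord0) //= ?eqxx point_gens0 mulrC big1 ?addr0 // => k /negbTE ->.
by rewrite mul0r.
Qed.

Lemma valid_xcoords X : (forall P, P \in X -> valid_point P) ->
  all (fun a => a != (0, 0)) [seq P.1 | P <- X].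
Proof. by move=> hv; apply/allP => _ /mapP[P PX ->]; case: (hv P PX). Qed.

Lemma xgen_points_ideal X : (forall P, P \in X -> valid_point P) ->
  points_ideal X (xgen [seq P.1 | P <- X]).
Proof.
move=> hv P PX; apply/divides_xform_point_ideal/divides_xform.
  by case: (hv P PX).
exact/xgen_xline_subst/map_f.
Qed.

Lemma points_ideal_zero_y_divides X p : (forall P, P \in X -> valid_point P) ->
  points_ideal X p -> p \mPo zero_y = p -> divides (xgen [seq P.1 | P <- X]) p.
Proof.
move=> hv Xp fixp; apply: xgen_divides (valid_xcoords hv) _.
apply/allP => _ /mapP[P PX ->].
by rewrite (point_ideal_xline_subst (Xp P PX) fixp).
Qed.

Lemma is_points_ideal_zero_y_gen (I : finType) (A : pred I) (g : I -> M) :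
  is_points_ideal (gen_ideal A g) -> exists2 i, A i & g i \mPo zero_y != 0.
Proof.
move=> [Y [hY eJ]].
apply: (@gen_ideal_zero_y_gen _ _ _ (xgen [seq P.1 | P <- Y])).
- exact/eJ/(xgen_points_ideal hY).
- exact: xgen_zero_y.
- exact/xgen_neq0/(valid_xcoords hY).
Qed.

Section Generators.
Variables (X : seq (point R)) (r : nat) (g : 'I_r -> M).
Hypothesis X_valid : forall P, P \in X -> valid_point P.
Hypothesis g_bihom : forall k, bihomogeneous (g k).
Hypothesis g_gen : same_ideal (gen_ideal predT g) (points_ideal X).
Let F := xgen [seq P.1 | P <- X].

Lemma gen_zero_y_divides k : divides F (g k \mPo zero_y).
Proof.
have [->|gk0] := eqVneq (g k \mPo zero_y) 0; first exact: divides0.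
rewrite (bihomogeneous_zero_y (g_bihom k) gk0).
apply: points_ideal_zero_y_divides => //.
  exact: (g_gen _).1 (gen_ideal_gen g k).
exact: bihomogeneous_zero_y.
Qed.

Lemma exists_gen_scale_xgen : exists k lam, lam != 0 /\ g k = lam *: F.
Proof.
have F0 : F != 0 := xgen_neq0 (valid_xcoords X_valid).
have [a ga] := fin_all_exists gen_zero_y_divides.
have [c Fc] := gen_ideal_zero_y ((g_gen F).2 (xgen_points_ideal X_valid)).
have sum1 : \sum_k (c k \mPo zero_y) * a k = 1.
  apply: (mulfI F0); rewrite mulr1 -[RHS]xgen_zero_y Fc mulr_sumr.
  by apply: eq_bigr => k _; rewrite ga mulrCA.
have [k ak0] := sum_mul_eq1_mcoeff0 sum1.
have gk0 : g k \mPo zero_y != 0.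
  by rewrite ga mulf_neq0 //; apply: contraNneq ak0 => ->; rewrite mcoeff0.
have gkE := bihomogeneous_zero_y (g_bihom k) gk0.
have [d Fd] := xgen_dhomog [seq P.1 | P <- X].
have [e ge] := bihomogeneous_dhomog (g_bihom k).
have Fak : F * a k \is e.-homog by rewrite -ga gkE.
have ak := dhomog_cofactor_const F0 Fd Fak ak0.
exists k, (a k)@_0; split => //.
by rewrite -gkE ga [in LHS]ak mulrC mul_mpolyC.
Qed.

End Generators.
End PointIdeals.

Theorem lemma3p1 (R : realType) (X : seq (point R)) (r : nat) (g : 'I_r -> Cpoly R) :
  (forall P, P \in X -> valid_point P) ->
  X != [::] ->
  minimal_bihom_gens g (points_ideal X) ->
  ~ exists S : {set 'I_r},
      [/\ S != set0, S != setT,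
          is_points_ideal (gen_ideal (fun i => i \in S) g)
        & is_points_ideal (gen_ideal (fun i => i \notin S) g)].
Proof.
move=> hv _ [hbih [hgen hmin]] [S [_ _ JS KS]].
have [i iS gi] := is_points_ideal_zero_y_gen JS.
have [j jS gj] := is_points_ideal_zero_y_gen KS.
have [k [lam [lam0 gk]]] := exists_gen_scale_xgen hv hbih hgen.
have [l lk gl] : exists2 l, l != k & g l \mPo zero_y != 0.
  have [ik|] := eqVneq i k; last by exists i.
  by exists j => //; apply: contraNneq jS => ->; rewrite -ik.
apply: (hmin l); have [a ga] := gen_zero_y_divides hv hbih hgen l.
apply: (gen_ideal_dependent (c := lam^-1 *: a) lk).
rewrite -(bihomogeneous_zero_y (hbih l) gl) ga gk -scalerAl -scalerAr scalerA.
by rewrite mulfV // scale1r.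
Qed.
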